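(* Let $(\mathcal{X},d)$ be a metric space, let $M>0$ be an integer, and let $x_o, x_1, \ldots, x_M, x_1', \ldots, x_M'$ be an $M$-configuration in $(\mathcal{X},d)$. Let $1 \le j \le M$ be any index and let $S \subset \{1,\ldots,M\}$ be any subset with $|S|>1$. Then the set $A = \{x_o, x_j'\} \cup \{x_i : i \in S\}$ has a nice $2$-clustering if and only if $j \notin S$.
   Context: A clustering of a set $A$ (with distance $d$) is a set of nonempty, pairwise disjoint subsets (clusters) whose union is $A$; a $k$-clustering is a clustering with exactly $k$ clusters. Write $x \sim_{\mathcal C} y$ if $x,y$ lie in the same cluster of $\mathcal C$, and $x \not\sim_{\mathcal C} y$ otherwise. A clustering $\mathcal C$ of $(A,d)$ is nice if for all $x,y,z\in A$: $d(y,x)<d(z,x)$ whenever $x\sim_{\mathcal C} y$ and $x\not\sim_{\mathcal C} z$. For an integer $M>0$, an $M$-configuration in a metric space $(\mathcal X,d)$ is a collection of $2M+1$ points $x_o, x_1,\ldots,x_M, x_1',\ldots,x_M'\in\mathcal X$ such that: (i) all pairwise distances among these points lie in $[1,2]$; (ii) $d(x_o,x_i)\in(3/2,2]$ and $d(x_o,x_i')\in(3/2,2]$ for all $i\ge 1$; (iii) $d(x_i,x_j), d(x_i',x_j'), d(x_i,x_j')\in[1,3/2]$ for all $i\neq j$, $i,j\ge1$; (iv) $d(x_i,x_i')>d(x_o,x_i)$ for all $i\ge 1$. *)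

From Stdlib Require Import Reals List.
Open Scope R_scope.

Definition is_metric {X : Type} (d : X -> X -> R) : Prop :=
  (forall x y, 0 <= d x y) /\
  (forall x y, d x y = 0 <-> x = y) /\
  (forall x y, d x y = d y x) /\
  (forall x y z, d x z <= d x y + d y z).

Definition is_k_clustering {X : Type} (A : X -> Prop) (k : nat)
    (C : nat -> X -> Prop) : Prop :=
  (forall i, (i < k)%nat -> exists x, C i x) /\
  (forall i j x, (i < k)%nat -> (j < k)%nat -> i <> j -> C i x -> C j x -> False) /\
  (forall i x, (i < k)%nat -> C i x -> A x) /\
  (forall x, A x -> exists i, (i < k)%nat /\ C i x).

Definition same_cluster {X : Type} (k : nat) (C : nat -> X -> Prop) (x y : X) : Prop :=
  exists i, (i < k)%nat /\ C i x /\ C i y.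

Definition is_nice {X : Type} (d : X -> X -> R) (A : X -> Prop) (k : nat)
    (C : nat -> X -> Prop) : Prop :=
  forall x y z, A x -> A y -> A z ->
    same_cluster k C x y -> ~ same_cluster k C x z -> d y x < d z x.

Definition has_nice_k_clustering {X : Type} (d : X -> X -> R) (A : X -> Prop)
    (k : nat) : Prop :=
  exists C, is_k_clustering A k C /\ is_nice d A k C.

Definition in12 (r : R) : Prop := 1 <= r <= 2.

Definition M_configuration {X : Type} (d : X -> X -> R) (M : nat)
    (xo : X) (x x' : nat -> X) : Prop :=
  let idx i := (1 <= i <= M)%nat in
  (forall i, idx i -> in12 (d xo (x i)) /\ in12 (d xo (x' i))) /\
  (forall i j, idx i -> idx j -> i <> j ->
      in12 (d (x i) (x j)) /\ in12 (d (x' i) (x' j))) /\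
  (forall i j, idx i -> idx j -> in12 (d (x i) (x' j))) /\
  (forall i, idx i -> 3/2 < d xo (x i) <= 2 /\ 3/2 < d xo (x' i) <= 2) /\
  (forall i j, idx i -> idx j -> i <> j ->
      (1 <= d (x i) (x j) <= 3/2) /\ (1 <= d (x' i) (x' j) <= 3/2) /\
      (1 <= d (x i) (x' j) <= 3/2)) /\
  (forall i, idx i -> d (x i) (x' i) > d xo (x i)).

(* If j is not in S, every point of A other than x_o lies within 3/2 of the
   others, while x_o is farther than 3/2 from all of them, so {x_o} and the
   rest form a nice 2-clustering.  If j is in S, pick k in S with k <> j;
   x_k is within 3/2 of every point other than x_o.  Niceness then forbids
   x_o from sharing a cluster with x_k, x_j or x_j', so x_j and x_j' share
   the other cluster, which is impossible since d(x_j, x_j') > d(x_o, x_j). *)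
From Stdlib Require Import Reals List Lra Lia Classical.
Open Scope R_scope.
Set Implicit Arguments.

Lemma metric_dist_self (X : Type) (d : X -> X -> R) :
  is_metric d -> forall w, d w w = 0.
Proof. intros [_ [Dz _]] w; apply Dz; reflexivity. Qed.

Lemma metric_dist_sym (X : Type) (d : X -> X -> R) :
  is_metric d -> forall a b, d a b = d b a.
Proof. intros [_ [_ [Ds _]]]; apply Ds. Qed.

Lemma NoDup_exists_neq (S : list nat) (j : nat) :
  NoDup S -> (1 < length S)%nat -> exists k, In k S /\ k <> j.
Proof.
  intros HND HL.
  destruct S as [|a [|b S']]; simpl in HL; try lia.
  apply NoDup_cons_iff in HND as [Ha _].
  destruct (Nat.eq_dec a j) as [->|Haj].
  - exists b; split; [simpl; auto|].
    intros ->; apply Ha; simpl; auto.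
  - exists a; split; [simpl; auto | exact Haj].
Qed.

Section Clusterings.

Variables (X : Type) (A : X -> Prop) (k : nat) (C : nat -> X -> Prop).
Hypothesis HC : is_k_clustering A k C.

Let same := same_cluster k C.

Lemma same_cluster_refl a : A a -> same a a.
Proof.
  destruct HC as [_ [_ [_ Ccov]]]; intros Aa.
  destruct (Ccov a Aa) as [i [Hi Ca]]; exists i; auto.
Qed.

Lemma same_cluster_sym a b : same a b -> same b a.
Proof. intros [i [Hi [Ca Cb]]]; exists i; auto. Qed.

Lemma same_cluster_trans a b c : same a b -> same b c -> same a c.
Proof.
  destruct HC as [_ [Cdis _]].
  intros [i [Hi [Ca Cb]]] [i' [Hi' [Cb' Cc]]].
  destruct (Nat.eq_dec i i') as [<-|Hne].
  - exists i; auto.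
  - exfalso; exact (Cdis i i' b Hi Hi' Hne Cb Cb').
Qed.

Lemma exists_not_same_cluster p :
  (1 < k)%nat -> exists q, A q /\ ~ same p q.
Proof.
  destruct HC as [Cne [Cdis [CA _]]]; intros Hk.
  destruct (Cne 0%nat ltac:(lia)) as [a Ca].
  destruct (Cne 1%nat ltac:(lia)) as [b Cb].
  assert (Hab : ~ same a b).
  { intros [i [Hi [Ca' Cb']]].
    destruct (Nat.eq_dec i 0) as [->|Hi0].
    - exact (Cdis 0 1 b ltac:(lia) Hk ltac:(lia) Cb' Cb)%nat.
    - exact (Cdis i 0 a Hi ltac:(lia) Hi0 Ca' Ca)%nat. }
  destruct (classic (same p a)) as [Hpa|Hpa].
  - exists b; split; [exact (CA 1%nat b Hk Cb)|].
    intros Hpb; apply Hab.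
    exact (same_cluster_trans (same_cluster_sym Hpa) Hpb).
  - exists a; split; [exact (CA 0%nat a ltac:(lia) Ca) | exact Hpa].
Qed.

Lemma same_cluster_of_two_clusters p a b :
  k = 2%nat -> A p -> A a -> A b -> ~ same p a -> ~ same p b -> same a b.
Proof.
  destruct HC as [_ [_ [_ Ccov]]]; intros -> Ap Aa Ab Hpa Hpb.
  destruct (Ccov p Ap) as [ip [Hip Cp]].
  destruct (Ccov a Aa) as [ia [Hia Ca]].
  destruct (Ccov b Ab) as [ib [Hib Cb]].
  destruct (Nat.eq_dec ip ia) as [<-|]; [exfalso; apply Hpa; exists ip; auto|].
  destruct (Nat.eq_dec ip ib) as [<-|]; [exfalso; apply Hpb; exists ip; auto|].
  exists ia; split; [exact Hia|]; split; [exact Ca|].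
  replace ia with ib by lia; exact Cb.
Qed.

Lemma nice_dist_lt (d : X -> X -> R) p w q :
  is_nice d A k C -> A p -> A w -> A q ->
  same p w -> ~ same p q -> d p w < d q w.
Proof.
  intros Hnice Ap Aw Aq Hpw Hpq.
  apply (Hnice w p q Aw Ap Aq (same_cluster_sym Hpw)).
  intros Hwq; exact (Hpq (same_cluster_trans Hpw Hwq)).
Qed.

End Clusterings.

Lemma has_nice_2_clustering_point_far {X : Type} (d : X -> X -> R)
    (p : X) (G : X -> Prop) (r : R) :
  is_metric d -> (exists w, G w) ->
  (forall w, G w -> r < d p w) ->
  (forall a b, G a -> G b -> d a b <= r) ->
  has_nice_k_clustering d (fun w => w = p \/ G w) 2.
Proof.
  intros Hd [g Gg] Hfar Hclose.
  assert (Hr : 0 <= r).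
  { rewrite <- (metric_dist_self Hd g); exact (Hclose g g Gg Gg). }
  assert (HpG : ~ G p).
  { intros Gp; pose proof (Hfar p Gp); pose proof (metric_dist_self Hd p); lra. }
  exists (fun n w => (n = 0%nat /\ w = p) \/ (n = 1%nat /\ G w)).
  split; [split; [|split; [|split]]|].
  - intros i Hi; destruct (Nat.eq_dec i 0) as [->|].
    + exists p; left; auto.
    + exists g; right; split; [lia | exact Gg].
  - intros i i' w Hi Hi' Hne [[-> ->]|[-> Gw]] [[-> Hw]|[-> Gw']]; try lia.
    + subst; exact (HpG Gw').
    + subst; exact (HpG Gw).
  - intros i w _ [[_ ->]|[_ Gw]]; [left | right]; auto.
  - intros w [->|Gw].
    + exists 0%nat; split; [lia | left; auto].
    + exists 1%nat; split; [lia | right; auto].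
  - intros a b c _ _ Ac [i [Hi [Ca Cb]]] Hac.
    destruct Ca as [[-> ->]|[-> Ga]], Cb as [[Hi1 ->]|[Hi1 Gb]]; try lia.
    + destruct Ac as [->|Gc].
      * exfalso; apply Hac; exists 0%nat; split; [lia | split; left; auto].
      * rewrite (metric_dist_self Hd p), (metric_dist_sym Hd c p).
        pose proof (Hfar c Gc); lra.
    + destruct Ac as [->|Gc].
      * pose proof (Hfar a Ga); pose proof (Hclose b a Gb Ga); lra.
      * exfalso; apply Hac; exists 1%nat; split; [lia | split; right; auto].
Qed.

Section Configuration.

Variables (X : Type) (d : X -> X -> R) (M : nat) (xo : X) (x x' : nat -> X).
Hypothesis Hd : is_metric d.
Hypothesis Hconf : M_configuration d M xo x x'.

Lemma config_dist_xo_x i : (1 <= i <= M)%nat -> 3/2 < d xo (x i).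
Proof. destruct Hconf as [_ [_ [_ [H _]]]]; intros Hi; apply (H i Hi). Qed.

Lemma config_dist_xo_x' i : (1 <= i <= M)%nat -> 3/2 < d xo (x' i).
Proof. destruct Hconf as [_ [_ [_ [H _]]]]; intros Hi; apply (H i Hi). Qed.

Lemma config_dist_x_x a b :
  (1 <= a <= M)%nat -> (1 <= b <= M)%nat -> d (x a) (x b) <= 3/2.
Proof.
  destruct Hconf as [_ [_ [_ [_ [H _]]]]]; intros Ha Hb.
  destruct (Nat.eq_dec a b) as [<-|Hab].
  - rewrite (metric_dist_self Hd _); lra.
  - apply (H a b Ha Hb Hab).
Qed.

Lemma config_dist_x_x' a b :
  (1 <= a <= M)%nat -> (1 <= b <= M)%nat -> a <> b -> d (x a) (x' b) <= 3/2.
Proof. destruct Hconf as [_ [_ [_ [_ [H _]]]]]; intros Ha Hb Hab; apply (H a b Ha Hb Hab). Qed.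

Lemma config_dist_x_x'_same i :
  (1 <= i <= M)%nat -> d xo (x i) < d (x i) (x' i).
Proof. destruct Hconf as [_ [_ [_ [_ [_ H]]]]]; intros Hi; apply (H i Hi). Qed.

Variables (j : nat) (S : list nat).
Hypothesis Hj : (1 <= j <= M)%nat.
Hypothesis HS : forall i, In i S -> (1 <= i <= M)%nat.

Definition config_others (w : X) : Prop :=
  w = x' j \/ exists i, In i S /\ w = x i.

Lemma config_others_far w : config_others w -> 3/2 < d xo w.
Proof.
  intros [->|[i [Hi ->]]]; [apply config_dist_xo_x' | apply config_dist_xo_x]; auto.
Qed.

Lemma config_others_close_to_x k w :
  In k S -> k <> j -> config_others w -> d (x k) w <= 3/2.
Proof.
  intros Hk Hkj [->|[i [Hi ->]]].
  - apply config_dist_x_x'; auto.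
  - apply config_dist_x_x; auto.
Qed.

Lemma config_others_close a b :
  ~ In j S -> config_others a -> config_others b -> d a b <= 3/2.
Proof.
  intros HjS [->|[i [Hi ->]]] Hb.
  - destruct Hb as [->|[i' [Hi' ->]]].
    + rewrite (metric_dist_self Hd _); lra.
    + rewrite (metric_dist_sym Hd _ _).
      apply config_dist_x_x'; auto; intros ->; contradiction.
  - apply config_others_close_to_x; auto; intros ->; contradiction.
Qed.

Lemma config_no_nice_2_clustering k :
  In j S -> In k S -> k <> j ->
  ~ has_nice_k_clustering d (fun w => w = xo \/ config_others w) 2.
Proof.
  intros HjS Hk Hkj [C [HC Hnice]].
  set (A := fun w => w = xo \/ config_others w) in *.
  assert (Axo : A xo) by (left; reflexivity).
  assert (Ax'j : A (x' j)) by (right; left; reflexivity).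
  assert (Axj : A (x j)) by (right; right; exists j; auto).
  assert (Axk : A (x k)) by (right; right; exists k; auto).
  assert (Hsep : forall w q, A w -> A q -> 3/2 < d xo w -> d q w <= 3/2 ->
                   ~ same_cluster 2 C xo q -> ~ same_cluster 2 C xo w).
  { intros w q Aw Aq Hfar Hnear Hq Hw.
    pose proof (nice_dist_lt HC Hnice Axo Aw Aq Hw Hq); lra. }
  assert (Hk_sep : ~ same_cluster 2 C xo (x k)).
  { destruct (exists_not_same_cluster HC xo ltac:(lia)) as [q [Aq Hq]].
    apply (Hsep _ q Axk Aq (config_dist_xo_x (HS k Hk))); [|exact Hq].
    destruct Aq as [->|Oq].
    - exfalso; exact (Hq (same_cluster_refl HC xo Axo)).
    - rewrite (metric_dist_sym Hd _ _); exact (config_others_close_to_x Hk Hkj Oq). }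
  assert (Hj_sep : ~ same_cluster 2 C xo (x j)).
  { apply (Hsep _ _ Axj Axk (config_dist_xo_x Hj) (config_dist_x_x (HS k Hk) Hj) Hk_sep). }
  assert (Hj'_sep : ~ same_cluster 2 C xo (x' j)).
  { apply (Hsep _ _ Ax'j Axk (config_dist_xo_x' Hj)); [|exact Hk_sep].
    apply config_dist_x_x'; auto. }
  assert (Hjj' := same_cluster_of_two_clusters HC eq_refl
                    Axo Ax'j Axj Hj'_sep Hj_sep).
  assert (Hj'xo : ~ same_cluster 2 C (x' j) xo).
  { intros H; exact (Hj'_sep (same_cluster_sym H)). }
  pose proof (nice_dist_lt HC Hnice Ax'j Axj Axo Hjj' Hj'xo).
  pose proof (config_dist_x_x'_same Hj).
  rewrite (metric_dist_sym Hd (x' j) (x j)) in *; lra.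
Qed.

End Configuration.

Theorem mainTheorem1 (X : Type) (d : X -> X -> R) (M : nat)
    (xo : X) (x x' : nat -> X) (j : nat) (S : list nat) :
  is_metric d ->
  (0 < M)%nat ->
  M_configuration d M xo x x' ->
  (1 <= j <= M)%nat ->
  NoDup S ->
  (forall i, In i S -> (1 <= i <= M)%nat) ->
  (1 < length S)%nat ->
  (has_nice_k_clustering d
     (fun w => w = xo \/ w = x' j \/ exists i, In i S /\ w = x i) 2
   <-> ~ In j S).
Proof.
  intros Hd _ Hconf Hj HND HS HL; split.
  - intros Hnice HjS.
    destruct (NoDup_exists_neq j HND HL) as [k [Hk Hkj]].
    exact (config_no_nice_2_clustering Hd Hconf Hj HS HjS Hk Hkj Hnice).
  - intros HjS.
    apply (@has_nice_2_clustering_point_far X d xo (config_others x x' j S) (3/2) Hd).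
    + exists (x' j); left; reflexivity.
    + exact (config_others_far Hconf Hj HS).
    + intros a b; exact (config_others_close Hd Hconf Hj HS HjS).
Qed.
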